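(* For all integers $n,\ell\geq 3$ the shift hypergraph $\mathrm{Sh}^{(3)}(n,\ell)$ is $K_4^{(3)-}$-free, i.e. no four of its vertices span three or more edges.
   Context: For integers $n,\ell\geq k\geq 2$ the $k$-uniform shift hypergraph $\mathrm{Sh}^{(k)}(n,\ell)$ has as vertex set the family of all $\ell$-element subsets of $[n]=\{1,\dots,n\}$, and for every increasing sequence $a_1<\dots<a_{k+\ell-1}$ of integers from $[n]$ it has the edge $\{x_1,\dots,x_k\}$ where $x_i=\{a_i,a_{i+1},\dots,a_{i+\ell-1}\}$ for $i\in[k]$; these are all its edges. $K_4^{(3)-}$ denotes the $3$-uniform hypergraph with four vertices and three edges. *)

From mathcomp Require Import all_boot all_order.
Set Implicit Arguments. Unset Strict Implicit. Unset Printing Implicit Defensive.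

(* The ground set [n] = {1,...,n} is represented by 'I_n = {0,...,n-1}
   (order-preserving relabelling i |-> i-1).  Vertices of Sh^(k)(n,l) are
   l-element subsets of 'I_n, i.e. elements of {set 'I_n} of cardinality l. *)

(* x_i = {a_i, ..., a_(i+l-1)} (0-indexed here: i : 'I_k, positions i..i+l-1). *)
Definition shift_vertex n l k (a : 'I_(k + l - 1) -> 'I_n) (i : 'I_k) : {set 'I_n} :=
  [set a j | j : 'I_(k + l - 1) & (i <= j < i + l)%N].

Definition shift_edge n l k (e : {set {set 'I_n}}) : Prop :=
  exists a : 'I_(k + l - 1) -> 'I_n,
    (forall i j : 'I_(k + l - 1), (i < j)%N -> (a i < a j)%N) /\
    e = [set shift_vertex a i | i : 'I_k].

Definition K4minus_free_shift n l : Prop :=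
  forall S : {set {set 'I_n}},
    #|S| = 4 ->
    (forall x, x \in S -> #|x| = l) ->
    ~ exists E : {set {set {set 'I_n}}},
        3 <= #|E| /\
        (forall e, e \in E -> shift_edge l 3 e /\ e \subset S).

From mathcomp Require Import all_boot all_order.
From mathcomp Require Import zify.
Set Implicit Arguments. Unset Strict Implicit. Unset Printing Implicit Defensive.

(* Weigh a vertex of Sh^(3)(n,l) by the sum of its elements and call X near Y
   when X loses at most one element on the way to Y.  An edge {x1, x2, x3} is
   then a chain: the weights increase along x1, x2, x3, consecutive vertices
   are near, and x1 is not near x3 since x1 :\: x3 = {a1, a2}.  Four points
   carry at most two chains, whatever the weight and the relation. *)

Lemma cards3 (T : finType) (x y z : T) :
  x != y -> x != z -> y != z -> #|[set x; y; z]| = 3.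
Proof.
by move=> xy xz yz; rewrite -setUA cardsU1 cards2 yz !inE negb_or xy xz.
Qed.

Lemma subset_card_setD1 (T : finType) (S e : {set T}) :
  #|S| = #|e|.+1 -> e \subset S -> exists2 m, m \in S & e = S :\ m.
Proof.
move=> cardS eS.
have /cards1P[m Sm] : #|S :\: e| == 1 by rewrite cardsDS // cardS subSnn.
exists m; first by have := set11 m; rewrite -Sm => /setDP[].
by rewrite -Sm setDDr setDv set0U; apply/esym/setIidPr.
Qed.

Lemma sum_lt_swap (T : finType) (g : T -> nat) (X Y : {set T}) (u v : T) :
  X :\: Y = [set u] -> Y :\: X = [set v] -> g u < g v ->
  \sum_(x in X) g x < \sum_(x in Y) g x.
Proof.
move=> XY YX uv.
by rewrite (big_setID Y) [X in _ < X](big_setID X) setIC XY YX !big_set1 ltn_add2l.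
Qed.

Section ChainTriples.
Variables (T : finType) (f : T -> nat) (R : rel T).

Definition chain (x y z : T) : Prop :=
  f x < f y /\ f y < f z /\ R x y /\ R y z /\ ~ R x z.

Definition chain_triple (e : {set T}) : Prop :=
  exists x y z, e = [set x; y; z] /\ chain x y z.

Definition chainable (x y z : T) : Prop :=
  chain x y z \/ chain x z y \/ chain y x z \/ chain y z x \/ chain z x y \/ chain z y x.

Lemma chainable_of_subset e x y z :
  chain_triple e -> e \subset [set x; y; z] -> chainable x y z.
Proof.
case=> u [v [w [-> uvw]]] /subsetP sub.
have mem t : t \in [set u; v; w] -> [\/ t = x, t = y | t = z].
  by move/sub; rewrite !inE -orbA => /or3P[]/eqP; [exact: Or31 | exact: Or32 | exact: Or33].
have memu : u \in [set u; v; w] by rewrite !inE eqxx.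
have memv : v \in [set u; v; w] by rewrite !inE eqxx orbT.
have memw : w \in [set u; v; w] by rewrite !inE eqxx !orbT.
move: uvw; case: (mem _ memu) (mem _ memv) (mem _ memw) => -> [] -> [] -> uvw;
  by rewrite /chainable; tauto || (case: uvw => [? [? _]]; lia).
Qed.

Lemma card_chain_triple e : chain_triple e -> #|e| = 3.
Proof.
by case=> x [y [z [-> [xy [yz _]]]]]; apply: cards3; apply/eqP=> ?; subst; lia.
Qed.

(* Sort the four points by f.  The triples {1,2,3} and {1,3,4} disagree on
   whether R relates points 1 and 3, and {1,2,4} and {2,3,4} disagree on
   points 2 and 4, so at most two of the four triples are chains. *)
Lemma no_three_chainable x y z t :
  chainable x z t -> chainable x y t -> chainable x y z -> False.
Proof.
case=> [|[|[|[|[|]]]]] [? [? r1]]; case=> [|[|[|[|[|]]]]] [? [? r2]];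
  case=> [|[|[|[|[|]]]]] [? [? r3]]; first [tauto | clear r1 r2 r3; lia].
Qed.

Theorem at_most_two_chain_triples (S : {set T}) (E : {set {set T}}) :
  #|S| = 4 -> (forall e, e \in E -> chain_triple e /\ e \subset S) -> #|E| <= 2.
Proof.
move=> cardS HE; rewrite leqNgt; apply/negP.
case/card_gt2P=> e1 [e2 [e3 [[E1 E2 E3] [ne12 ne23 ne31]]]].
have missing e : e \in E -> exists2 m, m \in S & e = S :\ m.
  by case/HE=> /card_chain_triple card_e eS; apply: subset_card_setD1; rewrite ?cardS ?card_e.
have [m1 S1 def_e1] := missing _ E1.
have [m2 S2 def_e2] := missing _ E2.
have [m3 S3 def_e3] := missing _ E3.
have neq_m (i j : T) : S :\ i != S :\ j -> i != j by apply: contra => /eqP->.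
have [A SA def_M] : exists2 A, A \in S & [set m1; m2; m3] = S :\ A.
  apply: subset_card_setD1; last by apply/subsetP=> X; rewrite !inE -orbA => /or3P[]/eqP->.
  by rewrite cards3 ?cardS // ?neq_m -?def_e1 -?def_e2 -?def_e3 // eq_sym.
have memS X : X \in S -> X \in [set A; m1; m2; m3].
  move=> SX; have [-> | XA] := eqVneq X A; first by rewrite !inE eqxx.
  have : X \in S :\ A by apply/setD1P.
  by rewrite -def_M !inE -!orbA => ->; rewrite orbT.
have chainable_missing m x y z :
    S :\ m \in E -> S \subset [set x; y; z; m] -> chainable x y z.
  case/HE=> ct _ /subsetP sub; apply: chainable_of_subset ct _.
  by apply/subsetP=> X /setD1P[Xm /sub]; rewrite !inE (negPf Xm) orbF.
apply: (@no_three_chainable A m1 m2 m3);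
  [apply: (@chainable_missing m1) | apply: (@chainable_missing m2)
  | apply: (@chainable_missing m3)]; rewrite -?def_e1 -?def_e2 -?def_e3 //;
  by apply/subsetP=> X /memS; rewrite !inE -!orbA; case/or4P=> ->; rewrite ?orbT.
Qed.
End ChainTriples.

Definition weight n (X : {set 'I_n}) : nat := \sum_(u in X) u.

Definition near n (X Y : {set 'I_n}) : bool := #|X :\: Y| <= 1.

Section Windows.
Variables (n m l : nat) (a : 'I_m -> 'I_n).
Hypothesis a_mono : forall i j : 'I_m, i < j -> a i < a j.

Definition window (i : nat) : {set 'I_n} := [set a j | j : 'I_m & i <= j < i + l].

Lemma a_inj : injective a.
Proof.
move=> i j eq_a; apply: ord_inj; case: (ltngtP i j) => // ij;
  by have := a_mono ij; rewrite eq_a ltnn.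
Qed.

Lemma mem_window i j : (a j \in window i) = (i <= j < i + l).
Proof. by rewrite mem_imset ?inE //; exact: a_inj. Qed.

Lemma windowP i X : reflect (exists2 j : 'I_m, i <= j < i + l & X = a j) (X \in window i).
Proof. by apply: (iffP imsetP) => -[j]; rewrite ?inE => ij ->; exists j; rewrite ?inE. Qed.

Lemma near_window_succ i : near (window i) (window i.+1).
Proof.
apply/card_le1_eqP => _ _ /setDP[/windowP[j ij ->] Nj] /setDP[/windowP[k ik ->] Nk].
rewrite !mem_window in Nj Nk; congr a; apply: ord_inj; lia.
Qed.

Lemma setD_window_succ (j : 'I_m) : 0 < l -> window j :\: window j.+1 = [set a j].
Proof.
move=> l_gt0; apply/setP => X; apply/idP/set1P.
- case/setDP=> /windowP[k jk ->]; rewrite mem_window => Nk; congr a; apply: ord_inj; lia.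
- by move->; rewrite inE !mem_window; lia.
Qed.

Lemma setD_window_pred i (j : 'I_m) : 0 < l -> j = i + l :> nat ->
  window i.+1 :\: window i = [set a j].
Proof.
move=> l_gt0 ji; apply/setP => X; apply/idP/set1P.
- case/setDP=> /windowP[k ik ->]; rewrite mem_window => Nk; congr a; apply: ord_inj; lia.
- by move->; rewrite inE !mem_window; lia.
Qed.

Lemma weight_window_lt i : 0 < l -> i + l < m -> weight (window i) < weight (window i.+1).
Proof.
move=> l_gt0 ilm; have ltim : i < m by lia.
apply: (sum_lt_swap (u := a (Ordinal ltim)) (v := a (Ordinal ilm))).
- exact: (setD_window_succ (Ordinal ltim)).
- exact: (setD_window_pred (j := Ordinal ilm)).
- by apply: a_mono => /=; lia.
Qed.

Lemma not_near_window_succ2 i : 1 < l -> i.+1 < m -> ~~ near (window i) (window i.+2).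
Proof.
move=> l_gt1 im; have ltim : i < m by lia.
pose p := Ordinal ltim; pose q := Ordinal im.
rewrite /near -ltnNge; apply: leq_trans (subset_leq_card (_ : [set a p; a q] \subset _)).
  by rewrite cards2 (inj_eq a_inj) -val_eqE /= neq_ltn ltnSn.
by apply/subsetP=> X; rewrite !inE => /orP[]/eqP->; rewrite !mem_window /=; lia.
Qed.

End Windows.

Lemma imset_ord3 (T : finType) (F : nat -> T) : [set F i | i : 'I_3] = [set F 0; F 1; F 2].
Proof.
apply/setP => X; apply/imsetP/idP.
- by case=> -[[|[|[|k]]] //= _] _ ->; rewrite !inE eqxx ?orbT.
- rewrite !inE -orbA => /or3P[]/eqP->.
  + by exists (Ordinal (isT : 0 < 3)).
  + by exists (Ordinal (isT : 1 < 3)).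
  + by exists (Ordinal (isT : 2 < 3)).
Qed.

Lemma shift_edge_chain_triple n l (e : {set {set 'I_n}}) :
  1 < l -> shift_edge l 3 e -> chain_triple (@weight n) (@near n) e.
Proof.
move=> l_gt1 [a [a_mono ->]].
exists (window l a 0), (window l a 1), (window l a 2); split; first exact: imset_ord3.
have l_gt0 : 0 < l by lia.
split; first by apply: weight_window_lt => //; lia.
split; first by apply: weight_window_lt => //; lia.
split; first exact: near_window_succ.
split; first exact: near_window_succ.
by apply/negP/not_near_window_succ2 => //; lia.
Qed.

Theorem lemma3p4 (n l : nat) : 3 <= n -> 3 <= l -> K4minus_free_shift n l.
Proof.
move=> _ l_ge3 S cardS _ [E [cardE edgesE]].
suff : #|E| <= 2 by lia.
apply: (at_most_two_chain_triples cardS) => e /edgesE[shift_e eS].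
by split=> //; apply: shift_edge_chain_triple shift_e; lia.
Qed.
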